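(* There is a constant $c>0$ such that for every formula $\phi$ in $\mathsf F(\mathrm{LTL}[\mathsf O])$ there is a deterministic Büchi automaton for $\mathcal L^\omega(\phi)$ with at most $2^{c\cdot\mathrm{size}(\phi)}$ states.
   Context: Let $AP$ be a finite set of atomic propositions and $\Sigma=2^{AP}$. Formulae of $\mathrm{LTL}[\mathsf O]$ are built from literals $p,\neg p$ ($p\in AP$) with $\land,\lor$ and the operator $\mathsf O$; $\mathsf F(\mathrm{LTL}[\mathsf O])$ consists of formulae $\mathsf F(\alpha)$ with $\alpha\in\mathrm{LTL}[\mathsf O]$. Semantics on infinite traces $\sigma\in\Sigma^\omega$ at positions $i\in\mathbb N$: literals/Booleans as usual; $\mathsf F\phi$: $\phi$ holds at some $j\ge i$; $\mathsf O\phi$: $\phi$ holds at some $0\le j\le i$; $\mathcal L^\omega(\phi)=\{\sigma\in\Sigma^\omega:\sigma,0\models\phi\}$. Size: literals 1, unary operators add 1, binary connectives sum plus 1. A deterministic Büchi automaton is $(Q,\Sigma,\delta,q_0,F)$ with finite $Q$, total $\delta:Q\times\Sigma\to Q$, initial $q_0$, accepting $F\subseteq Q$; it accepts $\sigma\in\Sigma^\omega$ iff its run visits $F$ infinitely often. *)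

From mathcomp Require Import all_boot.
From Stdlib Require Import Reals.
Set Implicit Arguments. Unset Strict Implicit. Unset Printing Implicit Defensive.

Definition letter (AP : finType) := {set AP}.
Definition trace (AP : finType) := nat -> letter AP.

Inductive ltlO (AP : finType) : Type :=
| PLit : AP -> ltlO AP
| NLit : AP -> ltlO AP
| And : ltlO AP -> ltlO AP -> ltlO AP
| Or : ltlO AP -> ltlO AP -> ltlO AP
| Once : ltlO AP -> ltlO AP.

Inductive fltlO (AP : finType) : Type :=
| Fin : ltlO AP -> fltlO AP.

Fixpoint sat_ltlO (AP : finType) (a : ltlO AP) (s : trace AP) (i : nat) : Prop :=
  match a with
  | PLit p => p \in s i
  | NLit p => p \notin s i
  | And a1 a2 => sat_ltlO a1 s i /\ sat_ltlO a2 s i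
  | Or a1 a2 => sat_ltlO a1 s i \/ sat_ltlO a2 s i
  | Once a1 => exists j, j <= i /\ sat_ltlO a1 s j
  end.

Definition sat_fltlO (AP : finType) (f : fltlO AP) (s : trace AP) (i : nat) : Prop :=
  match f with Fin a => exists j, i <= j /\ sat_ltlO a s j end.

Definition lang (AP : finType) (f : fltlO AP) : trace AP -> Prop :=
  fun s => sat_fltlO f s 0.

Fixpoint size_ltlO (AP : finType) (a : ltlO AP) : nat :=
  match a with
  | PLit _ | NLit _ => 1
  | And a1 a2 | Or a1 a2 => size_ltlO a1 + size_ltlO a2 + 1
  | Once a1 => size_ltlO a1 + 1
  end.

Definition size_fltlO (AP : finType) (f : fltlO AP) : nat :=
  match f with Fin a => size_ltlO a + 1 end.

Record DBA (AP : finType) := mkDBA {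
  dba_state : finType;
  dba_delta : dba_state -> letter AP -> dba_state;
  dba_init : dba_state;
  dba_acc : pred dba_state
}.

Fixpoint dba_run (AP : finType) (A : DBA AP) (s : trace AP) (n : nat) : dba_state A :=
  match n with
  | 0 => @dba_init AP A
  | n'.+1 => @dba_delta AP A (dba_run A s n') (s n')
  end.

Definition dba_accepts (AP : finType) (A : DBA AP) (s : trace AP) : Prop :=
  forall n, exists m, n <= m /\ @dba_acc AP A (dba_run A s m).

From mathcomp Require Import all_boot.
From Stdlib Require Import Reals.

Set Implicit Arguments.
Unset Strict Implicit.
Unset Printing Implicit Defensive.

(* A past-time formula can be evaluated online: reading the trace left to
   right, it suffices to remember one bit per [Once] subformula, namely
   whether its argument has already held.  For F(alpha) the automaton runs
   this monitor for [Once alpha] and accepts when the bit of the outermost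
   [Once] is set; since that bit never drops, it is set infinitely often iff
   alpha holds somewhere.  The state space has at most 2^(size alpha + 1)
   elements, so c = 1 works. *)

Fixpoint ltl_mem (AP : finType) (a : ltlO AP) : finType :=
  match a with
  | PLit _ | NLit _ => unit
  | And a1 a2 | Or a1 a2 => (ltl_mem a1 * ltl_mem a2)%type
  | Once a1 => (bool * ltl_mem a1)%type
  end.

Fixpoint ltl_mem0 (AP : finType) (a : ltlO AP) : ltl_mem a :=
  match a return ltl_mem a with
  | PLit _ | NLit _ => tt
  | And a1 a2 | Or a1 a2 => (ltl_mem0 a1, ltl_mem0 a2)
  | Once a1 => (false, ltl_mem0 a1)
  end.

Fixpoint ltl_eval (AP : finType) (a : ltlO AP) : ltl_mem a -> letter AP -> bool :=
  match a return ltl_mem a -> letter AP -> bool with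
  | PLit p => fun _ x => p \in x
  | NLit p => fun _ x => p \notin x
  | And a1 a2 => fun m x => @ltl_eval _ a1 m.1 x && @ltl_eval _ a2 m.2 x
  | Or a1 a2 => fun m x => @ltl_eval _ a1 m.1 x || @ltl_eval _ a2 m.2 x
  | Once a1 => fun m x => m.1 || @ltl_eval _ a1 m.2 x
  end.

Fixpoint ltl_next (AP : finType) (a : ltlO AP) : ltl_mem a -> letter AP -> ltl_mem a :=
  match a return ltl_mem a -> letter AP -> ltl_mem a with
  | PLit _ | NLit _ => fun m _ => m
  | And a1 a2 | Or a1 a2 => fun m x => (@ltl_next _ a1 m.1 x, @ltl_next _ a2 m.2 x)
  | Once a1 => fun m x => (m.1 || @ltl_eval _ a1 m.2 x, @ltl_next _ a1 m.2 x)
  end.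

Lemma ex_leqSP (P : nat -> Prop) n :
  (exists j, j <= n /\ P j) <-> (exists j, j < n /\ P j) \/ P n.
Proof.
split=> [[j [le_jn Pj]] | [[j [lt_jn Pj]] | Pn]].
- by move: le_jn; rewrite leq_eqVlt => /orP[/eqP <-|lt_jn]; [right | left; exists j].
- by exists j; split; first exact: ltnW.
- by exists n.
Qed.

Section Monitor.

Variables (AP : finType) (s : trace AP).

(* The memory after reading the first [n] letters: each [Once a1] bit records
   whether [a1] held at some position strictly before [n]. *)
Fixpoint ltl_mem_inv (n : nat) (a : ltlO AP) : ltl_mem a -> Prop :=
  match a return ltl_mem a -> Prop with
  | PLit _ | NLit _ => fun _ => True
  | And a1 a2 | Or a1 a2 => fun m => @ltl_mem_inv n a1 m.1 /\ @ltl_mem_inv n a2 m.2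
  | Once a1 => fun m =>
      (m.1 <-> exists j, j < n /\ sat_ltlO a1 s j) /\ @ltl_mem_inv n a1 m.2
  end.

Lemma ltl_mem_inv0 (a : ltlO AP) : ltl_mem_inv 0 (ltl_mem0 a).
Proof. by elim: a => //= a1 IH1 *; do !split => //; case=> ? []. Qed.

Lemma ltl_evalP n (a : ltlO AP) (m : ltl_mem a) :
  ltl_mem_inv n m -> ltl_eval m (s n) <-> sat_ltlO a s n.
Proof.
elim: a m => [p|p|a1 IH1 a2 IH2|a1 IH1 a2 IH2|a1 IH1] m //=.
- by case=> /IH1 <- /IH2 <-; split=> /andP.
- by case=> /IH1 <- /IH2 <-; split=> /orP.
- by case=> [m1P /IH1 eval1P]; rewrite ex_leqSP -m1P -eval1P; split=> /orP.
Qed.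

Lemma ltl_mem_inv_next n (a : ltlO AP) (m : ltl_mem a) :
  ltl_mem_inv n m -> ltl_mem_inv n.+1 (ltl_next m (s n)).
Proof.
elim: a m => [p|p|a1 IH1 a2 IH2|a1 IH1 a2 IH2|a1 IH1] m //=.
1,2: by case=> /IH1 ? /IH2.
- case=> [m1P inv1]; split; last exact: IH1.
  by rewrite ex_leqSP -m1P -(ltl_evalP inv1); split=> /orP.
Qed.

End Monitor.

Lemma card_ltl_mem (AP : finType) (a : ltlO AP) : #|ltl_mem a| <= expn 2 (size_ltlO a).
Proof.
elim: a => [p|p|a1 IH1 a2 IH2|a1 IH1 a2 IH2|a1 IH1] /=;
  rewrite ?card_prod ?card_unit ?card_bool // addn1 expnS ?expnD.
1,2: exact: leq_trans (leq_mul IH1 IH2) (leq_pmull _ _).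
- by rewrite leq_mul2l.
Qed.

Definition eventually_dba (AP : finType) (a : ltlO AP) : DBA AP :=
  @mkDBA AP (ltl_mem (Once a)) (@ltl_next AP (Once a)) (ltl_mem0 (Once a))
    (fun m => m.1).

Lemma eventually_dba_run_inv (AP : finType) (a : ltlO AP) (s : trace AP) n :
  ltl_mem_inv s n (dba_run (eventually_dba a) s n).
Proof.
elim: n => [|n IHn]; first exact: (ltl_mem_inv0 s (Once a)).
exact: ltl_mem_inv_next IHn.
Qed.

Lemma eventually_dbaP (AP : finType) (a : ltlO AP) (s : trace AP) :
  dba_accepts (eventually_dba a) s <-> lang (Fin a) s.
Proof.
have accP n : dba_acc (dba_run (eventually_dba a) s n) <->
              exists j, j < n /\ sat_ltlO a s j.
  exact: (proj1 (eventually_dba_run_inv a s n)).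
split=> [/(_ 0) [m [_ /accP [j [_ a_j]]]] | [j [_ a_j]] n].
- by exists j.
- exists (maxn n j.+1); split; first exact: leq_maxl.
  by apply/accP; exists j; split; first exact: leq_maxr.
Qed.

Lemma INR_expn m k : INR (expn m k) = (INR m ^ k)%R.
Proof. by elim: k => [|k IHk] //; rewrite expnS mult_INR IHk. Qed.

Theorem lemma8 (AP : finType) :
  exists c : R, (0 < c)%R /\
    forall phi : fltlO AP,
      exists A : DBA AP,
        (forall s : trace AP, dba_accepts A s <-> lang phi s) /\
        (INR #|@dba_state AP A| <= Rpower 2 (c * INR (size_fltlO phi)))%R.
Proof.
exists 1%R; split; first exact: Rlt_0_1.
case=> a; exists (eventually_dba a); split; first exact: eventually_dbaP.
rewrite Rmult_1_l Rpower_pow; last exact: Rlt_0_2.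
have -> : 2%R = INR 2 by [].
rewrite -INR_expn; apply/le_INR/leP.
exact: (card_ltl_mem (Once a)).
Qed.
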